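(* (Completeness of the tableau calculus for simple type theory.) Every finite branch that is unsatisfiable is refutable in the tableau calculus $\mathcal{T}$ described in the context.
   Context: Types: there is a countable set of base types, among them a distinguished base type $o$ (truth values); the other base types are called sorts ($\alpha$ ranges over sorts). Every base type is a type, and if $\sigma,\tau$ are types then $\sigma\tau$ is a type (functions from $\sigma$ to $\tau$; we write $\sigma\tau\mu$ for $\sigma(\tau\mu)$). There is a countable set of names, each with a unique type, with infinitely many names of every type. Terms: every name is a term; if $s:\tau\mu$ and $t:\tau$ then $st:\mu$; if $x:\sigma$ is a name and $t:\tau$ then $\lambda x.t:\sigma\tau$. $\mathrm{Wff}_\sigma$ is the set of terms of type $\sigma$. The logical constants are the names $\neg:oo$ and, for each type $\sigma$, $=_\sigma:\sigma\sigma o$; all other names are variables. A formula is a term of type $o$; $s=_\sigma t$ stands for $(=_\sigma s)t$ and $s\neq_\sigma t$ for $\neg(s=_\sigma t)$. Semantics: a frame is a function $\mathcal{D}$ mapping each type to a nonempty set with $\mathcal{D}(\sigma\tau)\subseteq(\mathcal{D}\sigma\to\mathcal{D}\tau)$ (total functions). An assignment into $\mathcal{D}$ is a function $\mathcal{I}$ extending $\mathcal{D}$ that maps each name $x:\sigma$ to an element of $\mathcal{D}\sigma$; $\mathcal{I}^x_a$ agrees with $\mathcal{I}$ except that it maps $x$ to $a$. The (partial) evaluation $\hat{\mathcal{I}}$ is: $\hat{\mathcal{I}}x=\mathcal{I}x$; $\hat{\mathcal{I}}(st)=fa$ if $\hat{\mathcal{I}}s=f$ and $\hat{\mathcal{I}}t=a$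 are defined; $\hat{\mathcal{I}}(\lambda x.s)=f$ if $\lambda x.s:\sigma\tau$, $f\in\mathcal{D}(\sigma\tau)$ and $\widehat{\mathcal{I}^x_a}s=fa$ for all $a\in\mathcal{D}\sigma$ (undefined otherwise). An interpretation is an assignment whose evaluation is defined on all terms. An assignment is logical if $\mathcal{I}o=\{0,1\}$, $\mathcal{I}(\neg)$ is negation and $\mathcal{I}(=_\sigma)$ is the identity predicate on $\mathcal{I}\sigma$. A logical interpretation satisfies a formula $s$ if $\hat{\mathcal{I}}s=1$; a model of a set $A$ of formulas is a logical interpretation satisfying every member of $A$; $A$ is satisfiable if it has a model. Normalization: a fixed type-preserving total function $[\cdot]$ on terms; $s$ is normal if $[s]=s$. It satisfies (N1) $[[s]]=[s]$; (N2) $[[s]t]=[st]$; (N3) $[x s_1\dots s_n]=x[s_1]\dots[s_n]$ whenever $x$ is a name, $n\ge 0$ and $xs_1\dots s_n$ has a base type; (N4) $\hat{\mathcal{I}}[s]=\hat{\mathcal{I}}s$ for every interpretation $\mathcal{I}$. A substitution is a type-preserving partial function from names to terms; $\theta^x_s$ agrees with $\theta$ except it maps $x$ to $s$. Every substitution $\theta$ extends to a type-preserving total function $\hat\theta$ on terms with (S1) $\hat\theta x=\theta x$ if $x\in\mathrm{Dom}\,\theta$ and $\hat\theta x=x$ otherwise; (S2) $\hat\theta(st)=(\hat\theta s)(\hat\theta t)$; (S3) $[(\hat\theta(\lambda x.s))t]=[\widehat{\theta^x_t}s]$; (S4) $[\hat\emptyset s]=[s]$ where $\emptyset$ is the empty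 substitution. Tableau calculus $\mathcal{T}$: a branch is a set of normal formulas. A rule instance $A/A_1\dots A_n$ consists of a finite branch $A$ containing the premises (and meeting the side conditions) where $A_i$ is $A$ together with the formulas of the $i$-th alternative of the conclusion. Rules ($x$ always a variable): (DN) from $\neg\neg s$ infer $s$. (BQ) from $s=_o t$: $\{s,t\}\mid\{\neg s,\neg t\}$. (BE) from $s\neq_o t$: $\{s,\neg t\}\mid\{\neg s,t\}$. (FQ) from $s=_{\sigma\tau}t$ infer $[su]=[tu]$ for any normal $u:\sigma$. (FE) from $s\neq_{\sigma\tau}t$ infer $[sx]\neq[tx]$ for a variable $x:\sigma$ not occurring free in $A$. (Mat) from $xs_1\dots s_n$ and $\neg xt_1\dots t_n$ ($n\ge0$): $s_1\neq t_1\mid\dots\mid s_n\neq t_n$ (no alternatives if $n=0$). (Dec) from $xs_1\dots s_n\neq_\alpha xt_1\dots t_n$ ($n\ge 0$): $s_1\neq t_1\mid\dots\mid s_n\neq t_n$. (Con) from $s=_\alpha t$ and $u\neq_\alpha v$: $\{s\neq u,t\neq u\}\mid\{s\neq v,t\neq v\}$. A branch $A$ is closed if $x,\neg x\in A$ for some variable $x:o$ or $x\neq_\alpha x\in A$ for some variable $x:\alpha$. Restrictions: (1) an instance whose branch $A$ is closed is admitted only if it is an instance of Mat or Dec with $n=0$; (2) FE may be applied to $s\neq t\in A$ only if there is no variable $x$ with $[sx]\neq[tx]\in A$. The set of refutable branches is the least set such that whenever $A/A_1\dots A_n$ is an admitted rule instance and $A_1,\dots,A_n$ are refutable, $A$ is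 refutable. *)

From Stdlib Require Import List.
Import ListNotations.

(* Base types are indexed by nat; [Base 0] is the distinguished type o of truth
   values, every other base type [Base (S n)] is a sort. *)
Inductive ty : Type :=
| Base : nat -> ty
| Arr : ty -> ty -> ty.   (* Arr s t  =  "s t", functions from s to t *)

Definition o : ty := Base 0.
Definition is_sort (a : ty) : Prop := exists n, a = Base (S n).

Definition ty_eq_dec (a b : ty) : {a = b} + {a <> b}.
Proof. decide equality; decide equality. Defined.

Inductive name : Type :=
| Var : ty -> nat -> name
| NegC : name
| EqC : ty -> name.

Definition nty (x : name) : ty :=
  match x with
  | Var t _ => t
  | NegC => Arr o o
  | EqC t => Arr t (Arr t o)
  end.

Definition is_var (x : name) : Prop := exists t n, x = Var t n.

Definition name_eq_dec (x y : name) : {x = y} + {x <> y}.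
Proof. decide equality; try apply ty_eq_dec; decide equality. Defined.

(** * Terms (raw) and typing; the terms of the paper are the well-typed ones *)
Inductive tm : Type :=
| N : name -> tm
| App : tm -> tm -> tm
| Lam : name -> tm -> tm.

Fixpoint typeof (s : tm) : option ty :=
  match s with
  | N x => Some (nty x)
  | App s u =>
      match typeof s, typeof u with
      | Some (Arr a b), Some c => if ty_eq_dec a c then Some b else None
      | _, _ => None
      end
  | Lam x s =>
      match typeof s with
      | Some b => Some (Arr (nty x) b)
      | None => None
      end
  end.

Definition wt (s : tm) : Prop := exists t, typeof s = Some t.

Definition Neg (s : tm) : tm := App (N NegC) s.
Definition Eq (t : ty) (s u : tm) : tm := App (App (N (EqC t)) s) u.
Definition Neq (t : ty) (s u : tm) : tm := Neg (Eq t s u).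

Definition apps (h : tm) (ss : list tm) : tm := fold_left App ss h.

Fixpoint free (x : name) (s : tm) : Prop :=
  match s with
  | N y => x = y
  | App s u => free x s \/ free x u
  | Lam y s => x <> y /\ free x s
  end.

(* A frame: a nonempty carrier for each type; D(s t) is represented as a set
   of total functions D s -> D t via the extensional application map [app]. *)
Record frame : Type := Frame {
  D : ty -> Type;
  D_inh : forall t, D t;
  app : forall s t, D (Arr s t) -> D s -> D t;
  app_ext : forall s t (f g : D (Arr s t)), (forall a, app s t f a = app s t g a) -> f = g
}.
Arguments app {F s t} _ _ : rename.

Definition assignment (F : frame) : Type := forall x : name, D F (nty x).

Definition upd (F : frame) (I : assignment F) (x : name) (a : D F (nty x)) : assignment F :=
  fun y => match name_eq_dec x y with
           | left e => eq_rect x (fun z => D F (nty z)) a y e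
           | right _ => I y
           end.

(* Partial evaluation, as a (functional) relation: [ev F I t s v] means
   \hat I s is defined and equals v (of type t). *)
Inductive ev (F : frame) : assignment F -> forall t, tm -> D F t -> Prop :=
| ev_N : forall I x, ev F I (nty x) (N x) (I x)
| ev_App : forall I a b s u f v,
    ev F I (Arr a b) s f -> ev F I a u v -> ev F I b (App s u) (app f v)
| ev_Lam : forall I x b s (f : D F (Arr (nty x) b)),
    (forall v : D F (nty x), ev F (upd F I x v) b s (app f v)) ->
    ev F I (Arr (nty x) b) (Lam x s) f.

Definition interpretation (F : frame) (I : assignment F) : Prop :=
  forall s t, typeof s = Some t -> exists v, ev F I t s v.

(* logical assignment: D o is {0,1} (via the bijection [tv], 1 = true),
   negation and identity are interpreted standardly. *)
Record logical (F : frame) (I : assignment F) (tv : D F o -> bool) : Prop := {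
  tv_inj : forall a b, tv a = tv b -> a = b;
  tv_surj : forall b, exists a, tv a = b;
  log_neg : forall a, tv (app (I NegC) a) = negb (tv a);
  log_eq : forall t (a b : D F t), tv (app (app (I (EqC t)) a) b) = true <-> a = b
}.

Definition satisfies (F : frame) (I : assignment F) (tv : D F o -> bool) (s : tm) : Prop :=
  exists v, ev F I o s v /\ tv v = true.

Definition satisfiable (A : tm -> Prop) : Prop :=
  exists (F : frame) (I : assignment F) (tv : D F o -> bool),
    logical F I tv /\ interpretation F I /\ forall s, A s -> satisfies F I tv s.

Definition norm_axioms (norm : tm -> tm) : Prop :=
  (forall s t, typeof s = Some t -> typeof (norm s) = Some t) /\
  (forall s, wt s -> norm (norm s) = norm s) /\
  (forall s t, wt (App s t) -> norm (App (norm s) t) = norm (App s t)) /\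
  (forall x ss b, typeof (apps (N x) ss) = Some (Base b) ->
     norm (apps (N x) ss) = apps (N x) (map norm ss)) /\
  (forall (F : frame) (I : assignment F), interpretation F I ->
     forall s t v, typeof s = Some t -> (ev F I t (norm s) v <-> ev F I t s v)).

Definition subst : Type := name -> option tm.
Definition wt_subst (th : subst) : Prop :=
  forall x u, th x = Some u -> typeof u = Some (nty x).
Definition supd (th : subst) (x : name) (u : tm) : subst :=
  fun y => if name_eq_dec x y then Some u else th y.

Definition subst_axioms (norm : tm -> tm) (sapp : subst -> tm -> tm) : Prop :=
  forall th, wt_subst th ->
  (forall s t, typeof s = Some t -> typeof (sapp th s) = Some t) /\
  (forall x, sapp th (N x) = match th x with Some u => u | None => N x end) /\
  (forall s t, wt (App s t) -> sapp th (App s t) = App (sapp th s) (sapp th t)) /\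
  (forall x s t, wt (Lam x s) -> typeof t = Some (nty x) ->
     norm (App (sapp th (Lam x s)) t) = norm (sapp (supd th x t) s)) /\
  (forall s, wt s -> norm (sapp (fun _ => None) s) = norm s).

Section Tableau.
Variable norm : tm -> tm.

Definition normal (s : tm) : Prop := norm s = s.
Definition branch (A : tm -> Prop) : Prop :=
  forall s, A s -> typeof s = Some o /\ normal s.
Definition finite (A : tm -> Prop) : Prop :=
  exists l : list tm, forall s, A s <-> In s l.

Definition closed (A : tm -> Prop) : Prop :=
  (exists n, A (N (Var o n)) /\ A (Neg (N (Var o n)))) \/
  (exists a n, is_sort a /\ A (Neq a (N (Var a n)) (N (Var a n)))).

Definition dec_alts (ss ts : list tm) (alts : list (list tm)) : Prop :=
  length ss = length ts /\
  Forall2 (fun alt st => exists a, typeof (fst st) = Some a /\ alt = [Neq a (fst st) (snd st)])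
          alts (combine ss ts).

Inductive rule : Type := RDN | RBQ | RBE | RFQ | RFE | RMat | RDec | RCon.

(* [step r A alts]: A / A_1 ... A_n is an instance of rule r (with the FE
   restriction (2)), where A_i = A together with the formulas in the i-th
   element of [alts]. *)
Inductive step : rule -> (tm -> Prop) -> list (list tm) -> Prop :=
| st_DN : forall (A : tm -> Prop) s, A (Neg (Neg s)) -> step RDN A [[s]]
| st_BQ : forall (A : tm -> Prop) s t, A (Eq o s t) -> step RBQ A [[s; t]; [Neg s; Neg t]]
| st_BE : forall (A : tm -> Prop) s t, A (Neq o s t) -> step RBE A [[s; Neg t]; [Neg s; t]]
| st_FQ : forall (A : tm -> Prop) a b s t u,
    A (Eq (Arr a b) s t) -> normal u -> typeof u = Some a ->
    step RFQ A [[Eq b (norm (App s u)) (norm (App t u))]]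
| st_FE : forall (A : tm -> Prop) a b s t n,
    A (Neq (Arr a b) s t) ->
    (forall r, A r -> ~ free (Var a n) r) ->
    ~ (exists m, A (Neq b (norm (App s (N (Var a m)))) (norm (App t (N (Var a m)))))) ->
    step RFE A [[Neq b (norm (App s (N (Var a n)))) (norm (App t (N (Var a n))))]]
| st_Mat : forall (A : tm -> Prop) x ss ts alts,
    is_var x -> A (apps (N x) ss) -> A (Neg (apps (N x) ts)) -> dec_alts ss ts alts ->
    step RMat A alts
| st_Dec : forall (A : tm -> Prop) a x ss ts alts,
    is_sort a -> is_var x -> A (Neq a (apps (N x) ss) (apps (N x) ts)) ->
    dec_alts ss ts alts -> step RDec A alts
| st_Con : forall (A : tm -> Prop) a s t u v,
    is_sort a -> A (Eq a s t) -> A (Neq a u v) ->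
    step RCon A [[Neq a s u; Neq a t u]; [Neq a s v; Neq a t v]].

Definition admitted (A : tm -> Prop) (alts : list (list tm)) : Prop :=
  exists r, step r A alts /\
    (closed A -> (r = RMat \/ r = RDec) /\ alts = []).

Inductive refutable : (tm -> Prop) -> Prop :=
| refute : forall (A : tm -> Prop) alts,
    branch A -> finite A -> admitted A alts ->
    (forall alt, In alt alts -> refutable (fun s => A s \/ In s alt)) ->
    refutable A.

End Tableau.

From Stdlib Require Import List Lia Wf_nat Classical ClassicalEpsilon.
From Stdlib Require Import FunctionalExtensionality PropExtensionality ProofIrrelevance Eqdep_dec.
From Stdlib Require Cantor.
Import ListNotations.
Arguments Cantor.to_nat : simpl never.

(* A finite branch that is not refutable is extended, by applying
   every rule instance fairly along an enumeration and always keeping a non-refutable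
   alternative, to an evident set: a set of normal formulas containing some alternative
   of every rule instance applicable to it.  Every evident set E is satisfiable.  Each
   type is interpreted by the possible values of its terms relative to E: truth values
   not refuted by E at o, maximal sets of terms pairwise not separated by a disequation
   of E at sorts, and functions mapping possible values of arguments to possible values
   of applications at function types.  By induction on types, an equation of E forces
   equal values and a disequation distinct ones, and every variable has a possible
   value (its applications to possible values are compatible, by Mat and Dec).  Hence
   every term evaluates to a possible value of each of its admissible substitution
   instances, and the formulas of E evaluate to true. *)

(** * Typing and normal forms *)

Lemma typeof_App s u b : typeof (App s u) = Some b <->
  exists a, typeof s = Some (Arr a b) /\ typeof u = Some a.
Proof.
  simpl. split.
  - destruct (typeof s) as [[|a b']|]; try discriminate.
    destruct (typeof u) as [c|]; try discriminate.
    destruct (ty_eq_dec a c); intros H; inversion H; subst; eauto.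
  - intros (a & -> & ->). destruct (ty_eq_dec a a); congruence.
Qed.

Lemma typeof_Neg s t : typeof (Neg s) = Some t <-> t = o /\ typeof s = Some o.
Proof.
  unfold Neg. rewrite typeof_App. simpl. split.
  - intros (a & H1 & H2). inversion H1; subst. auto.
  - intros [-> H]. eauto.
Qed.

Lemma typeof_Eq a s u t : typeof (Eq a s u) = Some t <->
  t = o /\ typeof s = Some a /\ typeof u = Some a.
Proof.
  unfold Eq. rewrite typeof_App. split.
  - intros (c & H1 & H2). apply typeof_App in H1 as (d & H3 & H4).
    simpl in H3. inversion H3; subst. auto.
  - intros (-> & H1 & H2). exists a. split; auto. apply typeof_App. exists a. auto.
Qed.

Lemma typeof_Neq a s u t : typeof (Neq a s u) = Some t <->
  t = o /\ typeof s = Some a /\ typeof u = Some a.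
Proof. unfold Neq. rewrite typeof_Neg, typeof_Eq. intuition. Qed.

Lemma apps_snoc h ss s : apps h (ss ++ [s]) = App (apps h ss) s.
Proof. unfold apps. rewrite fold_left_app. reflexivity. Qed.

Lemma apps_N_inj x y ss ts : apps (N x) ss = apps (N y) ts -> x = y /\ ss = ts.
Proof.
  revert ts. induction ss as [|s ss IH] using rev_ind; intros ts;
    destruct ts as [|t ts _] using rev_ind; rewrite ?apps_snoc; simpl; intros H;
    try discriminate.
  - inversion H; auto.
  - injection H as H ->. destruct (IH ts H) as [-> ->]. auto.
Qed.

Lemma typeof_apps_head h ss T : typeof (apps h ss) = Some T -> exists H, typeof h = Some H.
Proof.
  revert h. induction ss as [|s ss IH]; simpl; intros h Hh; eauto.
  destruct (IH _ Hh) as [H' HH]. apply typeof_App in HH as (a & Ha & _). eauto.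
Qed.

Lemma typeof_apps_args h1 h2 ss ts T1 T2 :
  typeof h1 = typeof h2 -> typeof (apps h1 ss) = Some T1 -> typeof (apps h2 ts) = Some T2 ->
  length ss = length ts ->
  Forall2 (fun s t => exists a, typeof s = Some a /\ typeof t = Some a) ss ts.
Proof.
  revert h1 h2 ts. induction ss as [|s ss IH]; intros h1 h2 ts E H1 H2 L;
    destruct ts as [|t ts]; simpl in L; try discriminate; constructor; simpl in H1, H2.
  - destruct (typeof_apps_head _ _ _ H1) as [A1 HA1].
    destruct (typeof_apps_head _ _ _ H2) as [A2 HA2].
    apply typeof_App in HA1 as (a & Ha & Hs). apply typeof_App in HA2 as (a' & Ha' & Ht).
    rewrite E, Ha' in Ha. inversion Ha; subst. eauto.
  - apply (IH (App h1 s) (App h2 t)); auto.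
    destruct (typeof_apps_head _ _ _ H1) as [A1 HA1].
    destruct (typeof_apps_head _ _ _ H2) as [A2 HA2].
    rewrite HA1, HA2.
    apply typeof_App in HA1 as (a & Ha & Hs). apply typeof_App in HA2 as (a' & Ha' & Ht).
    rewrite E, Ha' in Ha. congruence.
Qed.

Fixpoint tsize (t : ty) : nat :=
  match t with Base _ => 1 | Arr a b => S (tsize a + tsize b) end.

Lemma typeof_apps_arg h ss T H s : typeof (apps h ss) = Some T -> typeof h = Some H ->
  In s ss -> exists a, typeof s = Some a /\ tsize a < tsize H.
Proof.
  revert h H. induction ss as [|s' ss IH]; simpl; intros h H HT Hh Hin; [tauto|].
  destruct (typeof_apps_head _ _ _ HT) as [B HB].
  pose proof HB as HB'. apply typeof_App in HB as (a & Ha & Hs).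
  rewrite Hh in Ha. inversion Ha; subst. destruct Hin as [<-|Hin].
  - exists a. simpl. split; auto. lia.
  - destruct (IH _ _ HT HB' Hin) as (c & Hc & Hlt). exists c. simpl. split; auto. lia.
Qed.

Section Normalization.
Variable norm : tm -> tm.
Hypothesis Hnorm : norm_axioms norm.

Lemma norm_type s t : typeof s = Some t -> typeof (norm s) = Some t.
Proof. apply Hnorm. Qed.

Lemma norm_idem s t : typeof s = Some t -> normal norm (norm s).
Proof. intros H. apply Hnorm. eexists; eauto. Qed.

Lemma norm_App_norm s t : wt (App s t) -> norm (App (norm s) t) = norm (App s t).
Proof. apply Hnorm. Qed.

Lemma norm_apps x ss b : typeof (apps (N x) ss) = Some (Base b) ->
  norm (apps (N x) ss) = apps (N x) (map norm ss).
Proof. apply Hnorm. Qed.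

Lemma norm_Neg s : typeof s = Some o -> norm (Neg s) = Neg (norm s).
Proof. intros H. apply (norm_apps NegC [s] 0). simpl. rewrite H. reflexivity. Qed.

Lemma norm_Eq a s t : typeof s = Some a -> typeof t = Some a ->
  norm (Eq a s t) = Eq a (norm s) (norm t).
Proof. intros H1 H2. apply (norm_apps (EqC a) [s; t] 0). apply typeof_Eq; auto. Qed.

Lemma norm_Neq a s t : typeof s = Some a -> typeof t = Some a ->
  norm (Neq a s t) = Neq a (norm s) (norm t).
Proof. intros H1 H2. unfold Neq. rewrite norm_Neg, norm_Eq; auto. apply typeof_Eq; auto. Qed.

Lemma normal_Neg s : typeof s = Some o -> normal norm (Neg s) <-> normal norm s.
Proof.
  intros H. unfold normal. rewrite norm_Neg by auto. unfold Neg.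
  split; [intros E; injection E|intros ->]; auto.
Qed.

Lemma normal_Eq a s t : typeof s = Some a -> typeof t = Some a ->
  normal norm (Eq a s t) <-> normal norm s /\ normal norm t.
Proof.
  intros H1 H2. unfold normal. rewrite norm_Eq by auto. unfold Eq.
  split; [intros E; injection E|intros [-> ->]]; auto.
Qed.

Lemma normal_Neq a s t : typeof s = Some a -> typeof t = Some a ->
  normal norm (Neq a s t) <-> normal norm s /\ normal norm t.
Proof.
  intros H1 H2. unfold Neq. rewrite normal_Neg, normal_Eq; [tauto|auto..]. apply typeof_Eq; auto.
Qed.

Lemma normal_apps_arg x ss b s : typeof (apps (N x) ss) = Some (Base b) ->
  normal norm (apps (N x) ss) -> In s ss -> normal norm s.
Proof.
  intros HT. unfold normal. rewrite (norm_apps _ _ _ HT). intros E.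
  apply apps_N_inj in E as [_ E]. clear HT. revert E. induction ss as [|s' ss IH]; simpl; [tauto|].
  intros E. injection E as E1 E2. intros [<-|Hin]; [exact E1|exact (IH E2 Hin)].
Qed.

Lemma branch_Neg (A : tm -> Prop) s : branch norm A -> A (Neg s) ->
  typeof s = Some o /\ normal norm s.
Proof.
  intros HA H. destruct (HA _ H) as [T1 N1]. apply typeof_Neg in T1 as [_ T1].
  split; auto. apply normal_Neg; auto.
Qed.

Lemma branch_Eq (A : tm -> Prop) a s t : branch norm A -> A (Eq a s t) ->
  typeof s = Some a /\ typeof t = Some a /\ normal norm s /\ normal norm t.
Proof.
  intros HA H. destruct (HA _ H) as [T1 N1]. apply typeof_Eq in T1 as (_ & T1 & T2).
  apply normal_Eq in N1 as []; auto.
Qed.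

Lemma branch_Neq (A : tm -> Prop) a s t : branch norm A -> A (Neq a s t) ->
  typeof s = Some a /\ typeof t = Some a /\ normal norm s /\ normal norm t.
Proof.
  intros HA H. destruct (HA _ H) as [T1 N1]. apply typeof_Neq in T1 as (_ & T1 & T2).
  apply normal_Neq in N1 as []; auto.
Qed.

End Normalization.

(** * An enumeration of terms *)

Fixpoint enc_ty (t : ty) : nat :=
  match t with
  | Base n => Cantor.to_nat (0, n)
  | Arr a b => Cantor.to_nat (1, Cantor.to_nat (enc_ty a, enc_ty b))
  end.

Lemma enc_ty_inj a b : enc_ty a = enc_ty b -> a = b.
Proof.
  revert b. induction a as [n|a1 IH1 a2 IH2]; intros [m|b1 b2]; simpl; intros H;
    apply Cantor.to_nat_inj in H; try discriminate.
  - congruence.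
  - injection H as H. apply Cantor.to_nat_inj in H. injection H as H1 H2. f_equal; auto.
Qed.

Definition enc_name (x : name) : nat :=
  match x with
  | Var t n => Cantor.to_nat (0, Cantor.to_nat (enc_ty t, n))
  | NegC => Cantor.to_nat (1, 0)
  | EqC t => Cantor.to_nat (2, enc_ty t)
  end.

Lemma enc_name_inj x y : enc_name x = enc_name y -> x = y.
Proof.
  destruct x, y; simpl; intros H; apply Cantor.to_nat_inj in H; try discriminate; auto.
  - injection H as H. apply Cantor.to_nat_inj in H. injection H as H1 ->.
    apply enc_ty_inj in H1 as ->. auto.
  - injection H as H. apply enc_ty_inj in H as ->. auto.
Qed.

Fixpoint enc_tm (s : tm) : nat :=
  match s with
  | N x => Cantor.to_nat (0, enc_name x)
  | App s t => Cantor.to_nat (1, Cantor.to_nat (enc_tm s, enc_tm t))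
  | Lam x s => Cantor.to_nat (2, Cantor.to_nat (enc_name x, enc_tm s))
  end.

Lemma enc_tm_inj s t : enc_tm s = enc_tm t -> s = t.
Proof.
  revert t. induction s as [x|s1 IH1 s2 IH2|x s IH]; intros [y|t1 t2|y t]; simpl; intros H;
    apply Cantor.to_nat_inj in H; try discriminate; injection H as H.
  - apply enc_name_inj in H as ->. auto.
  - apply Cantor.to_nat_inj in H. injection H as H1 H2. f_equal; auto.
  - apply Cantor.to_nat_inj in H. injection H as H1 H2. apply enc_name_inj in H1. f_equal; auto.
Qed.

Definition tm_of_nat (n : nat) : tm :=
  match excluded_middle_informative (exists t, enc_tm t = n) with
  | left H => proj1_sig (constructive_indefinite_description _ H)
  | right _ => N NegC
  end.

Lemma tm_of_nat_surj t : exists n, tm_of_nat n = t.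
Proof.
  exists (enc_tm t). unfold tm_of_nat. destruct excluded_middle_informative as [H|H].
  - destruct constructive_indefinite_description as [t' Ht']. apply enc_tm_inj. auto.
  - exfalso. eauto.
Qed.

(** * Evident sets are satisfiable *)

Definition some_arg_Neq (E : tm -> Prop) (ss ts : list tm) : Prop :=
  exists s t a, In (s, t) (combine ss ts) /\ typeof s = Some a /\ E (Neq a s t).

Record evident (norm : tm -> tm) (E : tm -> Prop) : Prop := {
  evident_branch : branch norm E;
  evident_DN : forall s, E (Neg (Neg s)) -> E s;
  evident_BQ : forall s t, E (Eq o s t) -> (E s /\ E t) \/ (E (Neg s) /\ E (Neg t));
  evident_BE : forall s t, E (Neq o s t) -> (E s /\ E (Neg t)) \/ (E (Neg s) /\ E t);
  evident_FQ : forall a b s t u, E (Eq (Arr a b) s t) -> normal norm u -> typeof u = Some a ->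
    E (Eq b (norm (App s u)) (norm (App t u)));
  evident_FE : forall a b s t, E (Neq (Arr a b) s t) ->
    exists n, E (Neq b (norm (App s (N (Var a n)))) (norm (App t (N (Var a n)))));
  evident_Mat : forall x ss ts, is_var x -> E (apps (N x) ss) -> E (Neg (apps (N x) ts)) ->
    length ss = length ts -> some_arg_Neq E ss ts;
  evident_Dec : forall a x ss ts, is_sort a -> is_var x ->
    E (Neq a (apps (N x) ss) (apps (N x) ts)) -> length ss = length ts -> some_arg_Neq E ss ts;
  evident_Con : forall a s t u v, is_sort a -> E (Eq a s t) -> E (Neq a u v) ->
    (E (Neq a s u) /\ E (Neq a t u)) \/ (E (Neq a s v) /\ E (Neq a t v))
}.

Lemma sig_eq {A : Type} {P : A -> Prop} (x y : sig P) : proj1_sig x = proj1_sig y -> x = y.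
Proof. apply eq_sig_hprop. intros. apply proof_irrelevance. Qed.

Section Model.
Variable norm : tm -> tm.
Variable sapp : subst -> tm -> tm.
Hypothesis Hnorm : norm_axioms norm.
Hypothesis Hsubst : subst_axioms norm sapp.
Variable E : tm -> Prop.
Hypothesis HE : evident norm E.

Definition pv_bool (b : bool) (t : tm) : Prop :=
  if b then ~ E (Neg (norm t)) else ~ E (norm t).

Definition separated (a : ty) (s t : tm) : Prop := E (Neq a s t) \/ E (Neq a t s).

Record discriminant (a : ty) (P : tm -> Prop) : Prop := {
  disc_typed : forall s, P s -> typeof s = Some a /\ normal norm s;
  disc_compat : forall s t, P s -> P t -> ~ separated a s t;
  disc_max : forall s, typeof s = Some a -> normal norm s -> ~ separated a s s ->
    (forall t, P t -> ~ separated a s t) -> P s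
}.

(* [Dom T] is the carrier of type [T] and [pv T c s] says that [c] is a possible
   value of the term [s]: at [o] a truth value not refuted by [E] at [norm s], at a
   sort a discriminant containing [norm s], and at [A B] a function mapping possible
   values of arguments to possible values of applications.  The existential side
   conditions make every element a possible value of some term. *)
Fixpoint Dpv (T : ty) : {X : Type & X -> tm -> Prop} :=
  match T with
  | Base 0 => existT (fun X => X -> tm -> Prop)
      {b : bool | exists t, typeof t = Some o /\ pv_bool b t}
      (fun b t => pv_bool (proj1_sig b) t)
  | Base (S n) => existT (fun X => X -> tm -> Prop)
      {P : tm -> Prop | discriminant (Base (S n)) P /\ exists t, P t}
      (fun P t => proj1_sig P (norm t))
  | Arr A B => existT (fun X => X -> tm -> Prop)
      {f : projT1 (Dpv A) -> projT1 (Dpv B) | exists u, typeof u = Some (Arr A B) /\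
         forall c w, projT2 (Dpv A) c w -> typeof w = Some A -> projT2 (Dpv B) (f c) (App u w)}
      (fun f u => forall c w, projT2 (Dpv A) c w -> typeof w = Some A ->
         projT2 (Dpv B) (proj1_sig f c) (App u w))
  end.

Definition Dom (T : ty) : Type := projT1 (Dpv T).
Definition pv (T : ty) : Dom T -> tm -> Prop := projT2 (Dpv T).

Lemma Dom_witness T (c : Dom T) : exists t, typeof t = Some T /\ pv T c t.
Proof.
  destruct T as [[|n]|A B]; simpl in *.
  - destruct (proj2_sig c) as (t & H1 & H2). eauto.
  - destruct (proj2_sig c) as [HD [t Ht]]. exists t. destruct (disc_typed _ _ HD t Ht) as [H3 H4].
    split; auto. unfold pv; simpl. rewrite H4. auto.
  - destruct (proj2_sig c) as (u & H1 & H2). eauto.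
Qed.

Lemma pv_conv T c s s' : typeof s = Some T -> typeof s' = Some T -> norm s = norm s' ->
  pv T c s -> pv T c s'.
Proof.
  revert c s s'.
  induction T as [[|n]|A IHA B IHB]; intros c s s' Hs Hs' Hn; unfold pv; simpl.
  - unfold pv_bool. rewrite Hn. auto.
  - rewrite Hn. auto.
  - intros H c' w Hw Tw.
    assert (Hsw : typeof (App s w) = Some B) by (apply typeof_App; eauto).
    assert (Hsw' : typeof (App s' w) = Some B) by (apply typeof_App; eauto).
    apply (IHB _ (App s w)); auto.
    rewrite <- (norm_App_norm norm Hnorm s w), <- (norm_App_norm norm Hnorm s' w), Hn;
      unfold wt; eauto.
    apply H; auto.
Qed.

Lemma pv_norm T c s : typeof s = Some T -> pv T c s -> pv T c (norm s).
Proof.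
  intros H. apply pv_conv; auto using norm_type.
  symmetry. exact (norm_idem norm Hnorm s T H).
Qed.

Lemma separated_sym a s t : separated a s t -> separated a t s.
Proof. unfold separated. tauto. Qed.

Lemma separated_Con a s t u v : is_sort a -> E (Eq a s t) -> separated a u v ->
  (separated a s u /\ separated a t u) \/ (separated a s v /\ separated a t v).
Proof.
  unfold separated. intros Ha Hst [H|H].
  - destruct (evident_Con _ _ HE a s t u v Ha Hst H); tauto.
  - destruct (evident_Con _ _ HE a s t v u Ha Hst H); tauto.
Qed.

Lemma discriminant_sub a P Q : discriminant a P -> discriminant a Q ->
  (forall w w', P w -> Q w' -> ~ separated a w w') -> forall w, P w -> Q w.
Proof.
  intros HP HQ Hcross w Hw. destruct (disc_typed _ _ HP w Hw) as [Tw Nw].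
  apply (disc_max _ _ HQ); auto. exact (disc_compat _ _ HP w w Hw Hw).
Qed.

Lemma pv_Eq T s t c d : E (Eq T s t) -> pv T c s -> pv T d t -> c = d.
Proof.
  revert s t c d.
  induction T as [[|n]|A IHA B IHB]; intros s t c d HEq Hc Hd;
    destruct (branch_Eq norm Hnorm E _ s t (evident_branch _ _ HE) HEq) as (Ts & Tt & Ns & Nt).
  - apply sig_eq. destruct c as [b1 ?], d as [b2 ?]. revert Hc Hd.
    unfold pv; simpl. unfold pv_bool. unfold normal in Ns, Nt. rewrite Ns, Nt.
    destruct (evident_BQ _ _ HE s t HEq) as [[H1 H2]|[H1 H2]];
      destruct b1, b2; first [reflexivity | tauto].
  - destruct (proj2_sig c) as [Dc _], (proj2_sig d) as [Dd _].
    assert (Hs : is_sort (Base (S n))) by (exists n; auto).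
    assert (Hcs : proj1_sig c s) by (unfold pv in Hc; simpl in Hc; rewrite <- Ns; exact Hc).
    assert (Hdt : proj1_sig d t) by (unfold pv in Hd; simpl in Hd; rewrite <- Nt; exact Hd).
    assert (Hcross : forall w w', proj1_sig c w -> proj1_sig d w' -> ~ separated (Base (S n)) w w').
    { intros w w' Hw Hw' Hsep.
      destruct (separated_Con _ _ _ _ _ Hs HEq Hsep) as [[H _]|[_ H]].
      - exact (disc_compat _ _ Dc s w Hcs Hw H).
      - exact (disc_compat _ _ Dd t w' Hdt Hw' H). }
    apply sig_eq, functional_extensionality. intros w. apply propositional_extensionality.
    split; apply (discriminant_sub (Base (S n))); auto.
    intros v v' Hv Hv' Hsep. exact (Hcross v' v Hv' Hv (separated_sym _ _ _ Hsep)).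
  - apply sig_eq, functional_extensionality. intros a.
    destruct (Dom_witness A a) as (w & Tw & Hw).
    assert (Tw' : typeof (norm w) = Some A) by (apply norm_type; auto).
    apply pv_norm in Hw; auto.
    apply (IHB _ _ _ _ (evident_FQ _ _ HE _ _ _ _ _ HEq (norm_idem norm Hnorm w A Tw) Tw'));
      apply pv_norm; try (apply typeof_App; eauto); [apply Hc|apply Hd]; auto.
Qed.

Definition Neq_separates (T : ty) : Prop :=
  forall s t c, E (Neq T s t) -> pv T c s -> pv T c t -> False.

Definition var_valued (T : ty) : Prop := forall m, exists c : Dom T, pv T c (N (Var T m)).

Lemma Neq_separates_o : Neq_separates o.
Proof.
  intros s t [b Hb] HNeq. destruct (branch_Neq norm Hnorm E o s t (evident_branch _ _ HE) HNeq)
    as (_ & _ & Ns & Nt).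
  unfold pv; simpl. unfold pv_bool. unfold normal in Ns, Nt. rewrite Ns, Nt.
  destruct (evident_BE _ _ HE s t HNeq) as [[H1 H2]|[H1 H2]]; destruct b; tauto.
Qed.

Lemma Neq_separates_sort n : Neq_separates (Base (S n)).
Proof.
  intros s t c HNeq Hs Ht. destruct (branch_Neq norm Hnorm E _ s t (evident_branch _ _ HE) HNeq)
    as (_ & _ & Ns & Nt).
  destruct (proj2_sig c) as [Dc _]. unfold pv in Hs, Ht; simpl in Hs, Ht.
  unfold normal in Ns, Nt. rewrite Ns in Hs. rewrite Nt in Ht.
  apply (disc_compat _ _ Dc s t); auto. left. exact HNeq.
Qed.

Lemma Neq_separates_Arr A B : var_valued A -> Neq_separates B -> Neq_separates (Arr A B).
Proof.
  intros VA QB s t c HNeq Hs Ht.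
  destruct (branch_Neq norm Hnorm E _ s t (evident_branch _ _ HE) HNeq) as (Ts & Tt & _ & _).
  destruct (evident_FE _ _ HE _ _ _ _ HNeq) as [m Hm]. destruct (VA m) as [a Ha].
  apply (QB _ _ (proj1_sig c a) Hm); apply pv_norm;
    try (apply typeof_App; eauto); [apply Hs|apply Ht]; auto.
Qed.

Fixpoint compatible (T : ty) (P : tm -> Prop) : Prop :=
  match T with
  | Base 0 => forall s t, P s -> P t -> E (norm s) -> ~ E (Neg (norm t))
  | Base (S n) => forall s t, P s -> P t -> ~ E (Neq (Base (S n)) (norm s) (norm t))
  | Arr A B => forall c : Dom A,
      compatible B (fun u => exists s w, P s /\ pv A c w /\ typeof w = Some A /\ u = App s w)
  end.

Lemma compatible_sub T : forall (P Q : tm -> Prop),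
  (forall u, Q u -> P u) -> compatible T P -> compatible T Q.
Proof.
  induction T as [[|n]|A _ B IHB]; simpl; intros P Q HQP HP.
  - intros s t Hs Ht. apply HP; auto.
  - intros s t Hs Ht. apply HP; auto.
  - intros c. apply (IHB _ _ ) with (2 := HP c). intros u (s & w & Hs & Hw).
    exists s, w. auto.
Qed.

(* Add the terms one by one, in the order of the enumeration [tm_of_nat]. *)
Lemma discriminant_extend a (Q : tm -> Prop) :
  (forall s, Q s -> typeof s = Some a /\ normal norm s) ->
  (forall s t, Q s -> Q t -> ~ separated a s t) ->
  exists P, discriminant a P /\ forall s, Q s -> P s.
Proof.
  intros HQty HQcomp.
  set (stage := fix stage (k : nat) : tm -> Prop :=
    match k with
    | 0 => Q
    | S k => fun u => stage k u \/
        (u = tm_of_nat k /\ typeof u = Some a /\ normal norm u /\ ~ separated a u u /\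
         forall t, stage k t -> ~ separated a u t)
    end).
  assert (Hty : forall k s, stage k s -> typeof s = Some a /\ normal norm s).
  { induction k; simpl; intros s Hs; [auto|]. destruct Hs as [Hs|(_ & ? & ? & _)]; auto. }
  assert (Hmono : forall k j s, stage k s -> stage (j + k) s).
  { intros k j; induction j; simpl; auto. }
  assert (Hcomp : forall k s t, stage k s -> stage k t -> ~ separated a s t).
  { induction k; simpl; intros s t Hs Ht; [auto|].
    destruct Hs as [Hs|(Es & _ & _ & Hss & Hs)], Ht as [Ht|(Et & _ & _ & Htt & Ht)].
    - auto.
    - intros Hsep. apply (Ht s Hs), separated_sym, Hsep.
    - auto.
    - rewrite Es, <- Et. exact Htt. }
  exists (fun u => exists k, stage k u). split; [split|].
  - intros s [k Hs]. eauto.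
  - intros s t [k1 Hs] [k2 Ht]. apply (Hcomp (k1 + k2)); auto.
    replace (k1 + k2) with (k2 + k1) by lia. auto.
  - intros s Ts Ns Hss Hall. destruct (tm_of_nat_surj s) as [k Hk]. exists (S k). simpl.
    right. repeat split; auto. intros t Ht. apply Hall. eauto.
  - intros s Hs. exists 0. auto.
Qed.

Lemma compatible_pv_o P : (forall s, P s -> typeof s = Some o) -> (exists s, P s) ->
  compatible o P -> exists c : Dom o, forall s, P s -> pv o c s.
Proof.
  intros HT [s0 Hs0] HP.
  set (b := if excluded_middle_informative (exists s, P s /\ E (norm s)) then true else false).
  assert (Hb : forall s, P s -> pv_bool b s).
  { intros s Hs. unfold b, pv_bool. destruct excluded_middle_informative as [(s1 & H1 & H2)|Hn].
    - exact (HP s1 s H1 Hs H2).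
    - intros H. apply Hn. eauto. }
  exists (exist _ b (ex_intro _ s0 (conj (HT s0 Hs0) (Hb s0 Hs0)))). exact Hb.
Qed.

Lemma compatible_pv_sort n P : (forall s, P s -> typeof s = Some (Base (S n))) ->
  (exists s, P s) -> compatible (Base (S n)) P ->
  exists c : Dom (Base (S n)), forall s, P s -> pv (Base (S n)) c s.
Proof.
  intros HT [s0 Hs0] HP.
  destruct (discriminant_extend (Base (S n)) (fun u => exists s, P s /\ u = norm s))
    as (D & HD & HQD).
  - intros u (s & Hs & ->). split.
    + apply norm_type; auto.
    + exact (norm_idem norm Hnorm s _ (HT s Hs)).
  - intros u v (s & Hs & ->) (t & Ht & ->) [H|H]; [apply (HP s t)|apply (HP t s)]; auto.
  - exists (exist _ D (conj HD (ex_intro _ (norm s0) (HQD _ (ex_intro _ s0 (conj Hs0 eq_refl)))))).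
    intros s Hs. apply HQD. eauto.
Qed.

Lemma compatible_pv T : forall P, (forall s, P s -> typeof s = Some T) -> (exists s, P s) ->
  compatible T P -> exists c : Dom T, forall s, P s -> pv T c s.
Proof.
  induction T as [[|n]|A _ B IHB]; intros P HT HP0 HP.
  - apply compatible_pv_o; auto.
  - apply compatible_pv_sort; auto.
  - destruct HP0 as [s0 Hs0].
    assert (Hc : forall c : Dom A, exists d : Dom B, forall u,
       (exists s w, P s /\ pv A c w /\ typeof w = Some A /\ u = App s w) -> pv B d u).
    { intros c. apply IHB.
      - intros u (s & w & Hs & _ & Tw & ->). apply typeof_App. eauto.
      - destruct (Dom_witness A c) as (w & Tw & Hw). exists (App s0 w), s0, w. auto.
      - apply HP. }
    destruct (choice _ Hc) as [f Hf].
    assert (Hfun : exists u, typeof u = Some (Arr A B) /\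
      forall c w, pv A c w -> typeof w = Some A -> pv B (f c) (App u w)).
    { exists s0. split; auto. intros c w Hw Tw. apply Hf. exists s0, w. auto. }
    exists (exist _ f Hfun). intros s Hs c w Hw Tw. apply Hf. exists s, w. auto.
Qed.

Definition pv_arg (c : {A : ty & Dom A}) (t : tm) : Prop :=
  typeof t = Some (projT1 c) /\ pv (projT1 c) (projT2 c) t.

Definition applied_to_pvs (x : name) (cs : list {A : ty & Dom A}) (u : tm) : Prop :=
  exists ts, u = apps (N x) ts /\ Forall2 pv_arg cs ts.

Lemma combine_Forall2_common {X : Type} (R : X -> tm -> Prop) (f : tm -> tm) cs ts ts' s t :
  Forall2 R cs ts -> Forall2 R cs ts' -> In (s, t) (combine (map f ts) (map f ts')) ->
  exists c u u', s = f u /\ t = f u' /\ R c u /\ R c u' /\ In u ts.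
Proof.
  intros H1. revert ts'. induction H1 as [|c u cs ts Hcu _ IH]; intros ts' H2 Hin.
  - destruct Hin.
  - inversion H2 as [|c' u' cs' ts'' Hcu' Hr']; subst. destruct Hin as [Heq|Hin].
    + injection Heq as <- <-. exists c, u, u'. repeat split; auto. now left.
    + destruct (IH _ Hr' Hin) as (c0 & v & v' & ? & ? & ? & ? & ?).
      exists c0, v, v'. repeat split; auto. now right.
Qed.

Section Heads.
Variable x : name.
Hypothesis Hsmaller : forall A, tsize A < tsize (nty x) -> Neq_separates A.

(* Arguments of [x] have smaller types, on which disequations in [E] separate values. *)
Lemma applied_to_pvs_no_arg_Neq cs ts ts' T :
  Forall2 pv_arg cs ts -> Forall2 pv_arg cs ts' -> typeof (apps (N x) ts) = Some T ->
  ~ some_arg_Neq E (map norm ts) (map norm ts').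
Proof.
  intros Hts Hts' Ts (s & t & a & Hin & Ta & HNeq).
  destruct (combine_Forall2_common _ _ _ _ _ _ _ Hts Hts' Hin)
    as (c & u & u' & -> & -> & [Tu Pu] & [Tu' Pu'] & Inu).
  destruct (typeof_apps_arg _ _ _ _ u Ts eq_refl Inu) as (a' & Ta' & Hlt).
  rewrite Tu in Ta'. injection Ta' as <-.
  rewrite (norm_type _ Hnorm _ _ Tu) in Ta. injection Ta as <-.
  exact (Hsmaller _ Hlt _ _ (projT2 c) HNeq (pv_norm _ _ _ Tu Pu) (pv_norm _ _ _ Tu' Pu')).
Qed.

Lemma compatible_applied_to_pvs T : is_var x -> forall cs,
  (forall u, applied_to_pvs x cs u -> typeof u = Some T) -> compatible T (applied_to_pvs x cs).
Proof.
  intros Hx. induction T as [[|n]|A _ B IHB]; intros cs HT; simpl.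
  - intros s t (ts & -> & Hts) (ts' & -> & Hts') Hs Ht.
    assert (Ts := HT _ (ex_intro _ ts (conj eq_refl Hts))).
    assert (Tt := HT _ (ex_intro _ ts' (conj eq_refl Hts'))).
    rewrite (norm_apps _ Hnorm _ _ _ Ts) in Hs. rewrite (norm_apps _ Hnorm _ _ _ Tt) in Ht.
    apply (applied_to_pvs_no_arg_Neq cs ts ts' _ Hts Hts' Ts), (evident_Mat _ _ HE x); auto.
    rewrite !length_map, <- (Forall2_length Hts). exact (Forall2_length Hts').
  - intros s t (ts & -> & Hts) (ts' & -> & Hts') HNeq.
    assert (Ts := HT _ (ex_intro _ ts (conj eq_refl Hts))).
    assert (Tt := HT _ (ex_intro _ ts' (conj eq_refl Hts'))).
    rewrite (norm_apps _ Hnorm _ _ _ Ts), (norm_apps _ Hnorm _ _ _ Tt) in HNeq.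
    apply (applied_to_pvs_no_arg_Neq cs ts ts' _ Hts Hts' Ts), (evident_Dec _ _ HE (Base (S n)) x); auto.
    + exists n. reflexivity.
    + rewrite !length_map, <- (Forall2_length Hts). exact (Forall2_length Hts').
  - intros c. apply compatible_sub with (P := applied_to_pvs x (cs ++ [existT _ A c])).
    + intros u (s & w & (ts & -> & Hts) & Hw & Tw & ->). exists (ts ++ [w]).
      rewrite apps_snoc. split; auto. apply Forall2_app; [exact Hts|constructor; [split; auto|constructor]].
    + apply IHB. intros u (ts & -> & Hts).
      apply Forall2_app_inv_l in Hts as (l1 & l2 & H1 & H2 & ->).
      inversion H2 as [|c' w cs' l2' [Tw _] Hnil]; subst. inversion Hnil; subst.
      rewrite apps_snoc. apply typeof_App. exists A. split; auto.
      exact (HT _ (ex_intro _ l1 (conj eq_refl H1))).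
Qed.

End Heads.

Lemma var_valued_of_smaller T : (forall A, tsize A < tsize T -> Neq_separates A) -> var_valued T.
Proof.
  intros HQ m. set (x := Var T m).
  destruct (compatible_pv T (applied_to_pvs x [])) as [c Hc].
  - intros u (ts & -> & Hts). inversion Hts. reflexivity.
  - exists (N x), []. auto.
  - apply compatible_applied_to_pvs; auto.
    + exists T, m. reflexivity.
    + intros u (ts & -> & Hts). inversion Hts. reflexivity.
  - exists c. apply Hc. exists []. auto.
Qed.

Lemma Neq_separates_var_valued T : Neq_separates T /\ var_valued T.
Proof.
  induction T as [T IH] using (well_founded_induction (well_founded_ltof _ tsize)).
  unfold ltof in IH.
  assert (HQ : Neq_separates T).
  { destruct T as [[|n]|A B].
    - apply Neq_separates_o.
    - apply Neq_separates_sort.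
    - apply Neq_separates_Arr; apply IH; simpl; lia. }
  split; auto. apply var_valued_of_smaller. intros A HA. apply IH; auto.
Qed.

Lemma pv_bool_Neg b t : typeof t = Some o -> pv_bool b t -> pv_bool (negb b) (Neg t).
Proof.
  intros Ht. unfold pv_bool. rewrite (norm_Neg norm Hnorm t Ht).
  destruct b; simpl; auto. intros H1 H2. apply H1, (evident_DN _ _ HE), H2.
Qed.

Lemma neg_val_ok (c : Dom o) : exists t, typeof t = Some o /\ pv_bool (negb (proj1_sig c)) t.
Proof.
  destruct (Dom_witness o c) as (t & Ht & Hp). exists (Neg t). split.
  - apply typeof_Neg. auto.
  - apply pv_bool_Neg; auto.
Qed.

Definition neg_val (c : Dom o) : Dom o := exist _ (negb (proj1_sig c)) (neg_val_ok c).

Lemma neg_fun_ok : exists u, typeof u = Some (Arr o o) /\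
  forall c w, pv o c w -> typeof w = Some o -> pv o (neg_val c) (App u w).
Proof. exists (N NegC). split; auto. intros c w Hw Tw. apply pv_bool_Neg; auto. Qed.

Definition neg_fun : Dom (Arr o o) := exist _ neg_val neg_fun_ok.

Definition eq_bool (T : ty) (c d : Dom T) : bool :=
  if excluded_middle_informative (c = d) then true else false.

Lemma pv_bool_Eq T c d s t : typeof s = Some T -> typeof t = Some T ->
  pv T c s -> pv T d t -> pv_bool (eq_bool T c d) (Eq T s t).
Proof.
  intros Ts Tt Hs Ht. unfold pv_bool, eq_bool. rewrite (norm_Eq norm Hnorm T s t Ts Tt).
  apply pv_norm in Hs, Ht; auto.
  destruct excluded_middle_informative as [<-|Hne]; intros H.
  - exact (proj1 (Neq_separates_var_valued T) _ _ c H Hs Ht).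
  - exact (Hne (pv_Eq T _ _ c d H Hs Ht)).
Qed.

Lemma eq_val_ok T (c d : Dom T) : exists t, typeof t = Some o /\ pv_bool (eq_bool T c d) t.
Proof.
  destruct (Dom_witness T c) as (s & Ts & Hs), (Dom_witness T d) as (t & Tt & Ht).
  exists (Eq T s t). split.
  - apply typeof_Eq. auto.
  - apply pv_bool_Eq; auto.
Qed.

Definition eq_val T (c : Dom T) : Dom T -> Dom o :=
  fun d => exist _ (eq_bool T c d) (eq_val_ok T c d).

Lemma eq_fun1_ok T (c : Dom T) : exists u, typeof u = Some (Arr T o) /\
  forall d w, pv T d w -> typeof w = Some T -> pv o (eq_val T c d) (App u w).
Proof.
  destruct (Dom_witness T c) as (s & Ts & Hs). exists (App (N (EqC T)) s). split.
  - apply typeof_App. exists T. auto.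
  - intros d w Hw Tw. apply (pv_bool_Eq T c d s w); auto.
Qed.

Definition eq_fun1 T (c : Dom T) : Dom (Arr T o) := exist _ (eq_val T c) (eq_fun1_ok T c).

Lemma eq_fun_ok T : exists u, typeof u = Some (Arr T (Arr T o)) /\
  forall c w, pv T c w -> typeof w = Some T -> pv (Arr T o) (eq_fun1 T c) (App u w).
Proof.
  exists (N (EqC T)). split; auto. intros c w Hw Tw d w' Hw' Tw'.
  apply (pv_bool_Eq T c d w w'); auto.
Qed.

Definition eq_fun T : Dom (Arr T (Arr T o)) := exist _ (eq_fun1 T) (eq_fun_ok T).

Definition var_val T m : Dom T :=
  proj1_sig (constructive_indefinite_description _ (proj2 (Neq_separates_var_valued T) m)).

Lemma var_val_pv T m : pv T (var_val T m) (N (Var T m)).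
Proof. unfold var_val. destruct constructive_indefinite_description. auto. Qed.

Lemma pv_app_ext s t (f g : Dom (Arr s t)) : (forall a, proj1_sig f a = proj1_sig g a) -> f = g.
Proof. intros H. apply sig_eq, functional_extensionality. auto. Qed.

Definition pv_frame : frame :=
  Frame Dom (fun T => var_val T 0) (fun s t f a => proj1_sig f a) pv_app_ext.

Definition pv_assign : assignment pv_frame := fun x =>
  match x as x return Dom (nty x) with
  | Var T m => var_val T m
  | NegC => neg_fun
  | EqC T => eq_fun T
  end.

Definition pv_truth (b : D pv_frame o) : bool := proj1_sig b.

Lemma not_Neq_var_o : ~ E (Neq o (N (Var o 0)) (N (Var o 0))).
Proof.
  assert (Hx : is_var (Var o 0)) by (do 2 eexists; eauto).
  intros H. destruct (evident_BE _ _ HE _ _ H) as [[H1 H2]|[H1 H2]].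
  - destruct (evident_Mat _ _ HE _ [] [] Hx H1 H2 eq_refl) as (? & ? & ? & [] & _).
  - destruct (evident_Mat _ _ HE _ [] [] Hx H2 H1 eq_refl) as (? & ? & ? & [] & _).
Qed.

Lemma pv_logical : logical pv_frame pv_assign pv_truth.
Proof.
  set (x := N (Var o 0)).
  assert (Nx : norm x = x) by exact (norm_apps norm Hnorm (Var o 0) [] 0 eq_refl).
  assert (Hx : forall b, pv_bool b (if b then Eq o x x else Neq o x x)).
  { intros b. unfold pv_bool. destruct b;
      [rewrite (norm_Eq norm Hnorm o x x eq_refl eq_refl)
      |rewrite (norm_Neq norm Hnorm o x x eq_refl eq_refl)];
      rewrite Nx; apply not_Neq_var_o. }
  constructor.
  - intros a b H. apply sig_eq. exact H.
  - intros b. assert (Hb : exists t, typeof t = Some o /\ pv_bool b t).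
    { exists (if b then Eq o x x else Neq o x x). split; [|apply Hx].
      destruct b; [apply typeof_Eq|apply typeof_Neq]; auto. }
    exists (exist _ b Hb). reflexivity.
  - intros a. reflexivity.
  - intros t a b. unfold pv_truth. simpl. unfold eq_bool.
    destruct excluded_middle_informative; split; congruence.
Qed.

Definition admissible (th : subst) (J : assignment pv_frame) : Prop :=
  wt_subst th /\ forall x, pv (nty x) (J x) (sapp th (N x)).

Lemma upd_same J x c : upd pv_frame J x c x = c.
Proof.
  unfold upd. destruct (name_eq_dec x x) as [e|n]; [|congruence].
  rewrite (UIP_dec name_eq_dec e eq_refl). reflexivity.
Qed.

Lemma upd_other J x y c : x <> y -> upd pv_frame J x c y = J y.
Proof. intros H. unfold upd. destruct (name_eq_dec x y); congruence. Qed.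

Lemma wt_supd th x w : wt_subst th -> typeof w = Some (nty x) -> wt_subst (supd th x w).
Proof.
  intros Hth Tw y u. unfold supd. destruct (name_eq_dec x y) as [<-|_]; [|apply Hth].
  intros H. injection H as <-. exact Tw.
Qed.

Lemma admissible_upd th J x c w : admissible th J -> pv (nty x) c w ->
  typeof w = Some (nty x) -> admissible (supd th x w) (upd pv_frame J x c).
Proof.
  intros [Hwt Hth] Hc Tw. assert (Hwt' := wt_supd th x w Hwt Tw). split; auto.
  intros y. destruct (Hsubst _ Hwt') as (_ & S1 & _). rewrite S1. unfold supd.
  destruct (name_eq_dec x y) as [<-|Hxy].
  - rewrite upd_same. exact Hc.
  - rewrite upd_other by exact Hxy. destruct (Hsubst _ Hwt) as (_ & S1' & _).
    rewrite <- S1'. apply Hth.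
Qed.

(* The possible value of a body [s] under every [x := c] yields one of [Lam x s]:
   by S3, [sapp th (Lam x s)] applied to [w] normalises like [s] under [th, x := w]. *)
Lemma pv_sapp_Lam J x s B (f : Dom (nty x) -> Dom B) : typeof s = Some B ->
  (forall c th, admissible th (upd pv_frame J x c) -> pv B (f c) (sapp th s)) ->
  forall th, admissible th J -> typeof (sapp th (Lam x s)) = Some (Arr (nty x) B) /\
    forall c w, pv (nty x) c w -> typeof w = Some (nty x) ->
      pv B (f c) (App (sapp th (Lam x s)) w).
Proof.
  intros Hs Hf th Hth. destruct (Hsubst _ (proj1 Hth)) as (Sty & _ & _ & S3 & _).
  assert (TL : typeof (sapp th (Lam x s)) = Some (Arr (nty x) B)).
  { apply Sty. simpl. rewrite Hs. reflexivity. }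
  split; auto. intros c w Hcw Tw.
  assert (Hth' := admissible_upd th J x c w Hth Hcw Tw).
  apply (pv_conv B (f c) (sapp (supd th x w) s)).
  - apply (proj1 (Hsubst _ (proj1 Hth'))). exact Hs.
  - apply typeof_App. eauto.
  - rewrite S3; auto. exists (Arr (nty x) B). simpl. rewrite Hs. reflexivity.
  - apply Hf. exact Hth'.
Qed.

Lemma admissible_eval s : forall T J, typeof s = Some T -> (exists th, admissible th J) ->
  exists v, ev pv_frame J T s v /\ forall th, admissible th J -> pv T v (sapp th s).
Proof.
  induction s as [x | s1 IH1 s2 IH2 | x s IH]; intros T J HT Hadm.
  - simpl in HT. injection HT as <-. exists (J x). split.
    + constructor.
    + intros th [_ Hth]. apply Hth.
  - apply typeof_App in HT as (a & H1 & H2).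
    destruct (IH1 _ J H1 Hadm) as (f & Hf1 & Hf2), (IH2 _ J H2 Hadm) as (c & Hc1 & Hc2).
    exists (proj1_sig f c). split.
    + exact (ev_App pv_frame J a T s1 s2 f c Hf1 Hc1).
    + intros th Hth. destruct (Hsubst _ (proj1 Hth)) as (Sty & _ & S2 & _).
      rewrite S2 by (exists T; apply typeof_App; eauto).
      apply (Hf2 th Hth); [apply Hc2|apply Sty]; auto.
  - simpl in HT. destruct (typeof s) as [B|] eqn:Hs; [|discriminate]. injection HT as <-.
    destruct Hadm as [th0 Hth0].
    assert (Hc : forall c : Dom (nty x), exists v, ev pv_frame (upd pv_frame J x c) B s v /\
       forall th, admissible th (upd pv_frame J x c) -> pv B v (sapp th s)).
    { intros c. apply IH; auto. destruct (Dom_witness _ c) as (w & Tw & Pw).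
      exists (supd th0 x w). apply admissible_upd; auto. }
    destruct (choice _ Hc) as [f Hf].
    assert (Hlam := pv_sapp_Lam J x s B f Hs (fun c => proj2 (Hf c))).
    destruct (Hlam th0 Hth0) as [TL0 K0].
    exists (exist _ f (ex_intro _ (sapp th0 (Lam x s)) (conj TL0 K0))). split.
    + apply ev_Lam. intros c. apply (proj1 (Hf c)).
    + intros th Hth. exact (proj2 (Hlam th Hth)).
Qed.

Lemma admissible_empty : admissible (fun _ => None) pv_assign.
Proof.
  assert (W : wt_subst (fun _ => None)) by (intros y u H; discriminate).
  split; auto. intros x. destruct (Hsubst _ W) as (_ & S1 & _). rewrite S1.
  destruct x as [T m| |T].
  - apply var_val_pv.
  - intros c w Hw Tw. apply pv_bool_Neg; auto.
  - intros c w Hw Tw d w' Hw' Tw'. apply (pv_bool_Eq T c d w w'); auto.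
Qed.

Theorem evident_satisfiable : satisfiable E.
Proof.
  assert (Hadm := ex_intro (fun th => admissible th pv_assign) _ admissible_empty).
  exists pv_frame, pv_assign, pv_truth. split; [apply pv_logical|split].
  - intros s t Ts. destruct (admissible_eval s t pv_assign Ts Hadm) as (v & Hv & _). eauto.
  - intros s Hs. destruct (evident_branch _ _ HE s Hs) as [Ts Ns].
    destruct (admissible_eval s o pv_assign Ts Hadm) as (v & Hv & Hp).
    exists v. split; auto.
    assert (W : wt_subst (fun _ => None)) by (intros y u H; discriminate).
    destruct (Hsubst _ W) as (Sty & _ & _ & _ & S4).
    assert (Hpv := pv_conv o v _ s (Sty _ _ Ts) Ts
      (S4 s (ex_intro _ o Ts)) (Hp _ admissible_empty)).
    destruct v as [[|] ?]; [reflexivity|]. exfalso.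
    unfold pv, pv_bool in Hpv; simpl in Hpv. rewrite Ns in Hpv. exact (Hpv Hs).
Qed.

End Model.

(** * Non-refutable branches extend to evident sets *)

Fixpoint max_var_index (s : tm) : nat :=
  let idx x := match x with Var _ n => n | _ => 0 end in
  match s with
  | N x => idx x
  | App s t => max (max_var_index s) (max_var_index t)
  | Lam x s => max (idx x) (max_var_index s)
  end.

Lemma free_var_index a n r : free (Var a n) r -> n <= max_var_index r.
Proof.
  induction r as [x|s IHs t IHt|x s IH]; simpl; intros H.
  - subst. lia.
  - destruct H as [H|H]; [apply IHs in H|apply IHt in H]; lia.
  - destruct H as [_ H]. apply IH in H. lia.
Qed.

Lemma finite_fresh_var (A : tm -> Prop) a : finite A ->
  exists n, forall r, A r -> ~ free (Var a n) r.
Proof.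
  intros [l Hl]. exists (S (fold_right (fun r m => max (max_var_index r) m) 0 l)).
  intros r Hr Hf. apply Hl in Hr. apply free_var_index in Hf.
  enough (max_var_index r <= fold_right (fun r m => max (max_var_index r) m) 0 l) by lia.
  clear Hl Hf. induction l as [|r' l IHl]; simpl in *; [tauto|].
  destruct Hr as [->|Hr]; [|specialize (IHl Hr)]; lia.
Qed.

Lemma dec_alts_exists ss ts : (forall s, In s ss -> exists a, typeof s = Some a) ->
  length ss = length ts -> exists alts, dec_alts ss ts alts.
Proof.
  revert ts. induction ss as [|s ss IH]; intros [|t ts] Hty L; simpl in L; try discriminate.
  - exists []. split; auto.
  - destruct (Hty s (or_introl eq_refl)) as [a Ha].
    destruct (IH ts (fun s' H => Hty s' (or_intror H)) ltac:(lia)) as (alts & L' & Hal).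
    exists ([Neq a s t] :: alts). split; simpl; auto. constructor; auto. exists a. auto.
Qed.

Lemma dec_alts_in ss ts alts alt : dec_alts ss ts alts -> In alt alts ->
  exists s t a, In (s, t) (combine ss ts) /\ typeof s = Some a /\ alt = [Neq a s t].
Proof.
  intros [_ H]. induction H as [|al [s t] alts' l' (a & Ha & ->) _ IH]; simpl; [tauto|].
  intros [<-|Hin].
  - exists s, t, a. auto.
  - destruct (IH Hin) as (s' & t' & a' & ? & ? & ?). exists s', t', a'. auto.
Qed.

Definition rule_of_nat (k : nat) : rule :=
  match k with
  | 0 => RDN | 1 => RBQ | 2 => RBE | 3 => RFQ | 4 => RFE | 5 => RMat | 6 => RDec | _ => RCon
  end.

Definition nat_of_rule (r : rule) : nat :=
  match r with
  | RDN => 0 | RBQ => 1 | RBE => 2 | RFQ => 3 | RFE => 4 | RMat => 5 | RDec => 6 | RCon => 7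
  end.

Definition request_of_nat (c : nat) : rule * tm * tm * tm :=
  let (k, c1) := Cantor.of_nat c in
  let (i, c2) := Cantor.of_nat c1 in
  let (j, l) := Cantor.of_nat c2 in (rule_of_nat k, tm_of_nat i, tm_of_nat j, tm_of_nat l).

Lemma request_of_nat_surj r p q u : exists c, request_of_nat c = (r, p, q, u).
Proof.
  destruct (tm_of_nat_surj p) as [i <-], (tm_of_nat_surj q) as [j <-], (tm_of_nat_surj u) as [l <-].
  exists (Cantor.to_nat (nat_of_rule r, Cantor.to_nat (i, Cantor.to_nat (j, l)))).
  unfold request_of_nat. rewrite !Cantor.cancel_of_to. destruct r; reflexivity.
Qed.

Lemma Cantor_fst_unbounded c m : exists n, m <= n /\ fst (Cantor.of_nat n) = c.
Proof.
  exists (Cantor.to_nat (c, m)). rewrite Cantor.cancel_of_to. split; auto.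
  pose proof (Cantor.to_nat_non_decreasing c m). lia.
Qed.

Section Saturation.
Variable norm : tm -> tm.
Hypothesis Hnorm : norm_axioms norm.

Definition extend (A : tm -> Prop) (alt : list tm) : tm -> Prop := fun s => A s \/ In s alt.

Definition consistent (A : tm -> Prop) : Prop := branch norm A /\ finite A /\ ~ refutable norm A.

Lemma finite_extend A alt : finite A -> finite (extend A alt).
Proof.
  intros [l Hl]. exists (l ++ alt). intros s. unfold extend. rewrite in_app_iff, Hl. tauto.
Qed.

Lemma Neg_wf s : typeof s = Some o -> normal norm s ->
  typeof (Neg s) = Some o /\ normal norm (Neg s).
Proof. intros Ts Ns. split; [apply typeof_Neg|apply normal_Neg]; auto. Qed.

Lemma Eq_wf a s t : typeof s = Some a -> typeof t = Some a -> normal norm s -> normal norm t ->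
  typeof (Eq a s t) = Some o /\ normal norm (Eq a s t).
Proof. intros. split; [apply typeof_Eq|apply normal_Eq]; auto. Qed.

Lemma Neq_wf a s t : typeof s = Some a -> typeof t = Some a -> normal norm s -> normal norm t ->
  typeof (Neq a s t) = Some o /\ normal norm (Neq a s t).
Proof. intros. split; [apply typeof_Neq|apply normal_Neq]; auto. Qed.

Lemma norm_App_wf s u b : typeof (App s u) = Some b ->
  typeof (norm (App s u)) = Some b /\ normal norm (norm (App s u)).
Proof. intros H. split; [apply norm_type|apply (norm_idem norm Hnorm _ b)]; auto. Qed.

Lemma Forall2_In_combine {X Y : Type} (R : X -> Y -> Prop) l1 l2 x y :
  Forall2 R l1 l2 -> In (x, y) (combine l1 l2) -> R x y.
Proof.
  induction 1; simpl; [tauto|]. intros [H1|H1]; [injection H1 as -> ->|]; auto.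
Qed.

Lemma dec_alts_wf x ss ts alts alt b :
  typeof (apps (N x) ss) = Some (Base b) -> typeof (apps (N x) ts) = Some (Base b) ->
  normal norm (apps (N x) ss) -> normal norm (apps (N x) ts) ->
  dec_alts ss ts alts -> In alt alts -> forall s, In s alt -> typeof s = Some o /\ normal norm s.
Proof.
  intros T1 T2 N1 N2 Hd Hin. destruct (dec_alts_in _ _ _ _ Hd Hin) as (s & t & a & Hst & Ta & ->).
  intros s' [<-|[]].
  pose proof (typeof_apps_args _ _ _ _ _ _ eq_refl T1 T2 (proj1 Hd)) as F.
  destruct (Forall2_In_combine _ _ _ _ _ F Hst) as (a' & Ta' & Tb').
  rewrite Ta in Ta'. injection Ta' as <-.
  apply Neq_wf; auto.
  - apply (normal_apps_arg norm Hnorm x ss b); auto. eapply in_combine_l; eauto.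
  - apply (normal_apps_arg norm Hnorm x ts b); auto. eapply in_combine_r; eauto.
Qed.

Lemma step_alt_wf r A alts alt : branch norm A -> step norm r A alts -> In alt alts ->
  forall s, In s alt -> typeof s = Some o /\ normal norm s.
Proof.
  intros HA Hs Hin.
  destruct Hs as [A s H | A s t H | A s t H | A a b s t u H Hu Tu | A a b s t n H _ _
                 | A x ss ts alts Hx H1 H2 Hd | A a x ss ts alts [k ->] Hx H Hd
                 | A a s t u v Ha H1 H2].
  - destruct (branch_Neg norm Hnorm A _ HA H) as [T1 N1].
    apply typeof_Neg in T1 as [_ T1]. apply (normal_Neg norm Hnorm s T1) in N1.
    destruct Hin as [<-|[]]. intros s' [<-|[]]. auto.
  - destruct (branch_Eq norm Hnorm A _ _ _ HA H) as (T1 & T2 & N1 & N2).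
    destruct Hin as [<-|[<-|[]]]; intros s' Hs'; simpl in Hs';
      repeat destruct Hs' as [<-|Hs']; try contradiction; auto using Neg_wf.
  - destruct (branch_Neq norm Hnorm A _ _ _ HA H) as (T1 & T2 & N1 & N2).
    destruct Hin as [<-|[<-|[]]]; intros s' Hs'; simpl in Hs';
      repeat destruct Hs' as [<-|Hs']; try contradiction; auto using Neg_wf.
  - destruct (branch_Eq norm Hnorm A _ _ _ HA H) as (T1 & T2 & _ & _).
    destruct Hin as [<-|[]]. intros s' [<-|[]].
    destruct (norm_App_wf s u b) as [Ts Ns]; [apply typeof_App; eauto|].
    destruct (norm_App_wf t u b) as [Tt Nt]; [apply typeof_App; eauto|].
    apply Eq_wf; auto.
  - destruct (branch_Neq norm Hnorm A _ _ _ HA H) as (T1 & T2 & _ & _).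
    destruct Hin as [<-|[]]. intros s' [<-|[]].
    destruct (norm_App_wf s (N (Var a n)) b) as [Ts Ns]; [apply typeof_App; eauto|].
    destruct (norm_App_wf t (N (Var a n)) b) as [Tt Nt]; [apply typeof_App; eauto|].
    apply Neq_wf; auto.
  - destruct (HA _ H1) as [T1 N1]. destruct (branch_Neg norm Hnorm A _ HA H2) as [T2 N2].
    exact (dec_alts_wf x ss ts alts alt 0 T1 T2 N1 N2 Hd Hin).
  - destruct (branch_Neq norm Hnorm A _ _ _ HA H) as (T1 & T2 & N1 & N2).
    exact (dec_alts_wf x ss ts alts alt (S k) T1 T2 N1 N2 Hd Hin).
  - destruct (branch_Eq norm Hnorm A _ _ _ HA H1) as (T1 & T2 & N1 & N2).
    destruct (branch_Neq norm Hnorm A _ _ _ HA H2) as (T3 & T4 & N3 & N4).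
    destruct Hin as [<-|[<-|[]]]; intros s' Hs'; simpl in Hs';
      repeat destruct Hs' as [<-|Hs']; try contradiction; auto using Neq_wf.
Qed.

Lemma consistent_not_closed A : consistent A -> ~ closed A.
Proof.
  intros (HB & HF & HR) Hc. apply HR. apply refute with (alts := []); auto.
  - destruct Hc as [(n & H1 & H2)|(a & n & Ha & H)].
    + exists RMat. split; auto.
      apply (st_Mat norm A (Var o n) [] [] []); auto; [do 2 eexists; eauto|split; auto].
    + exists RDec. split; auto.
      apply (st_Dec norm A a (Var a n) [] [] []); auto; [do 2 eexists; eauto|split; auto].
  - intros alt [].
Qed.

(* Restriction (1) is harmless: a consistent branch is never closed. *)
Lemma consistent_step r A alts : consistent A -> step norm r A alts ->
  exists alt, In alt alts /\ consistent (extend A alt).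
Proof.
  intros HA Hs. apply NNPP. intros Hno. pose proof HA as (HB & HF & HR). apply HR.
  apply refute with (alts := alts); auto.
  - exists r. split; auto. intros Hc. exfalso. exact (consistent_not_closed A HA Hc).
  - intros alt Hin. apply NNPP. intros Hr. apply Hno. exists alt.
    split; [exact Hin|split; [|split; [apply finite_extend; auto|exact Hr]]].
    intros u [Hu|Hu]; [apply HB; auto|exact (step_alt_wf r A alts alt HB Hs Hin u Hu)].
Qed.

(* A request [(r, p, q, u)] names rule applications by their principal formulas [p], [q]
   and the instance term [u] of FQ; the fresh variable of FE is deliberately left free,
   since which variables are fresh changes along the chain. *)
Definition request_alts (r : rule) (p q u : tm) (alts : list (list tm)) : Prop :=
  match r with
  | RDN => exists s, p = Neg (Neg s) /\ alts = [[s]]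
  | RBQ => exists s t, p = Eq o s t /\ alts = [[s; t]; [Neg s; Neg t]]
  | RBE => exists s t, p = Neq o s t /\ alts = [[s; Neg t]; [Neg s; t]]
  | RFQ => exists a b s t, p = Eq (Arr a b) s t /\ alts = [[Eq b (norm (App s u)) (norm (App t u))]]
  | RFE => exists a b s t n, p = Neq (Arr a b) s t /\
      alts = [[Neq b (norm (App s (N (Var a n)))) (norm (App t (N (Var a n))))]]
  | RMat => exists x ss ts, p = apps (N x) ss /\ q = Neg (apps (N x) ts) /\ dec_alts ss ts alts
  | RDec => exists a x ss ts, p = Neq a (apps (N x) ss) (apps (N x) ts) /\ dec_alts ss ts alts
  | RCon => exists a s t u' v, p = Eq a s t /\ q = Neq a u' v /\
      alts = [[Neq a s u'; Neq a t u']; [Neq a s v; Neq a t v]]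
  end.

Definition consistent_set : Type := {A : tm -> Prop | consistent A}.

Definition serves (A : tm -> Prop) (req : rule * tm * tm * tm) (B : tm -> Prop) : Prop :=
  let '(r, p, q, u) := req in
  exists alts alt, step norm r A alts /\ request_alts r p q u alts /\ In alt alts /\
    B = extend A alt.

Definition serve (req : rule * tm * tm * tm) (A : consistent_set) : consistent_set :=
  match excluded_middle_informative
          (exists B : consistent_set, serves (proj1_sig A) req (proj1_sig B)) with
  | left H => proj1_sig (constructive_indefinite_description _ H)
  | right _ => A
  end.

Variable A0 : tm -> Prop.
Hypothesis HA0 : consistent A0.

Fixpoint chain (n : nat) : consistent_set :=
  match n with
  | 0 => exist _ A0 HA0
  | S n => serve (request_of_nat (fst (Cantor.of_nat n))) (chain n)
  end.

Definition chain_set (n : nat) : tm -> Prop := proj1_sig (chain n).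

Definition chain_union (s : tm) : Prop := exists n, chain_set n s.

Lemma serve_sub req A s : proj1_sig A s -> proj1_sig (serve req A) s.
Proof.
  intros H. unfold serve. destruct excluded_middle_informative; auto.
  destruct constructive_indefinite_description as [B HB]. simpl.
  destruct req as [[[r p] q] u]. destruct HB as (alts & alt & _ & _ & _ & ->). left. exact H.
Qed.

Lemma chain_set_mono m n s : m <= n -> chain_set m s -> chain_set n s.
Proof.
  induction 1 as [|k _ IH]; auto. intros H. apply serve_sub, IH, H.
Qed.

Lemma chain_union_eventually s : chain_union s -> exists m, forall n, m <= n -> chain_set n s.
Proof. intros [m Hm]. exists m. intros n H. eapply chain_set_mono; eauto. Qed.

Lemma chain_union_request r p q u m :
  (forall n, m <= n -> exists alts, step norm r (chain_set n) alts /\ request_alts r p q u alts) ->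
  exists alts alt, request_alts r p q u alts /\ In alt alts /\
    forall s, In s alt -> chain_union s.
Proof.
  intros H. destruct (request_of_nat_surj r p q u) as [c Hc].
  destruct (Cantor_fst_unbounded c m) as (n & Hmn & Hn).
  destruct (H n Hmn) as (alts & Hs & Hreq).
  destruct (consistent_step r _ alts (proj2_sig (chain n)) Hs) as (alt & Hin & Hcons).
  assert (Hex : exists B : consistent_set, serves (chain_set n) (r, p, q, u) (proj1_sig B)).
  { exists (exist _ (extend (chain_set n) alt) Hcons). exists alts, alt. auto. }
  assert (HS : chain_set (S n) = proj1_sig (serve (r, p, q, u) (chain n))).
  { unfold chain_set. simpl. rewrite Hn, Hc. reflexivity. }
  revert HS. unfold serve. destruct excluded_middle_informative as [He|He]; [|contradiction].
  destruct constructive_indefinite_description as [B HB]. simpl.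
  destruct HB as (alts' & alt' & _ & Hreq' & Hin' & ->). intros HS.
  exists alts', alt'. repeat split; auto. intros s Hs'. exists (S n). rewrite HS. right. exact Hs'.
Qed.

Lemma chain_union_branch : branch norm chain_union.
Proof. intros s [n Hn]. exact (proj1 (proj2_sig (chain n)) s Hn). Qed.

Lemma chain_union_DN s : chain_union (Neg (Neg s)) -> chain_union s.
Proof.
  intros H. destruct (chain_union_eventually _ H) as [m Hm].
  destruct (chain_union_request RDN (Neg (Neg s)) s s m) as (alts & alt & Hreq & Hin & He).
  { intros n Hn. exists [[s]]. split; [constructor; auto|exists s; auto]. }
  destruct Hreq as (s' & Hp & ->). injection Hp as ->.
  destruct Hin as [<-|[]]. apply He. left. reflexivity.
Qed.

Lemma chain_union_BQ s t : chain_union (Eq o s t) ->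
  (chain_union s /\ chain_union t) \/ (chain_union (Neg s) /\ chain_union (Neg t)).
Proof.
  intros H. destruct (chain_union_eventually _ H) as [m Hm].
  destruct (chain_union_request RBQ (Eq o s t) s s m) as (alts & alt & Hreq & Hin & He).
  { intros n Hn. eexists. split; [constructor; auto|exists s, t; auto]. }
  destruct Hreq as (s' & t' & Hp & ->). injection Hp as -> ->.
  destruct Hin as [<-|[<-|[]]]; [left|right]; split; apply He; simpl; auto.
Qed.

Lemma chain_union_BE s t : chain_union (Neq o s t) ->
  (chain_union s /\ chain_union (Neg t)) \/ (chain_union (Neg s) /\ chain_union t).
Proof.
  intros H. destruct (chain_union_eventually _ H) as [m Hm].
  destruct (chain_union_request RBE (Neq o s t) s s m) as (alts & alt & Hreq & Hin & He).
  { intros n Hn. eexists. split; [constructor; auto|exists s, t; auto]. }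
  destruct Hreq as (s' & t' & Hp & ->). injection Hp as -> ->.
  destruct Hin as [<-|[<-|[]]]; [left|right]; split; apply He; simpl; auto.
Qed.

Lemma chain_union_FQ a b s t u : chain_union (Eq (Arr a b) s t) -> normal norm u ->
  typeof u = Some a -> chain_union (Eq b (norm (App s u)) (norm (App t u))).
Proof.
  intros H Hu Tu. destruct (chain_union_eventually _ H) as [m Hm].
  destruct (chain_union_request RFQ (Eq (Arr a b) s t) s u m) as (alts & alt & Hreq & Hin & He).
  { intros n Hn. eexists. split; [econstructor; eauto|exists a, b, s, t; auto]. }
  destruct Hreq as (a' & b' & s' & t' & Hp & ->). injection Hp as -> -> -> ->.
  destruct Hin as [<-|[]]. apply He. left. reflexivity.
Qed.

(* If no instance were ever added, restriction (2) would never block FE, and a fresh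
   variable always exists for the finite stages. *)
Lemma chain_union_FE a b s t : chain_union (Neq (Arr a b) s t) ->
  exists n, chain_union (Neq b (norm (App s (N (Var a n)))) (norm (App t (N (Var a n))))).
Proof.
  intros H. apply NNPP. intros Hno. destruct (chain_union_eventually _ H) as [m Hm].
  destruct (chain_union_request RFE (Neq (Arr a b) s t) s s m) as (alts & alt & Hreq & Hin & He).
  { intros n Hn. destruct (finite_fresh_var (chain_set n) a (proj1 (proj2 (proj2_sig (chain n)))))
      as [k Hk].
    eexists. split.
    - apply (st_FE norm (chain_set n) a b s t k); auto.
      intros [k' Hk']. apply Hno. exists k', n. exact Hk'.
    - exists a, b, s, t, k. auto. }
  destruct Hreq as (a' & b' & s' & t' & k & Hp & ->). injection Hp as -> -> -> ->.
  destruct Hin as [<-|[]]. apply Hno. exists k. apply He. left. reflexivity.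
Qed.

Lemma chain_union_Mat x ss ts : is_var x -> chain_union (apps (N x) ss) ->
  chain_union (Neg (apps (N x) ts)) -> length ss = length ts ->
  some_arg_Neq chain_union ss ts.
Proof.
  intros Hx H1 H2 L.
  destruct (chain_union_eventually _ H1) as [m1 Hm1], (chain_union_eventually _ H2) as [m2 Hm2].
  destruct (dec_alts_exists ss ts) as [alts0 Hd0]; auto.
  { intros s Hs. destruct (chain_union_branch _ H1) as [T1 _].
    destruct (typeof_apps_arg _ _ _ _ s T1 eq_refl Hs) as (a & Ta & _). eauto. }
  destruct (chain_union_request RMat (apps (N x) ss) (Neg (apps (N x) ts)) (N x) (max m1 m2))
    as (alts & alt & Hreq & Hin & He).
  { intros n Hn. exists alts0. split.
    - apply (st_Mat norm (chain_set n) x ss ts alts0); auto; [apply Hm1|apply Hm2]; lia.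
    - exists x, ss, ts. auto. }
  destruct Hreq as (x' & ss' & ts' & Hp & Hq & Hd).
  apply apps_N_inj in Hp as [<- <-]. injection Hq as Hq. apply apps_N_inj in Hq as [_ <-].
  destruct (dec_alts_in _ _ _ _ Hd Hin) as (s & t & a & Hst & Ta & ->).
  exists s, t, a. repeat split; auto. apply He. left. reflexivity.
Qed.

Lemma chain_union_Dec a x ss ts : is_sort a -> is_var x ->
  chain_union (Neq a (apps (N x) ss) (apps (N x) ts)) -> length ss = length ts ->
  some_arg_Neq chain_union ss ts.
Proof.
  intros Ha Hx H L. destruct (chain_union_eventually _ H) as [m Hm].
  destruct (dec_alts_exists ss ts) as [alts0 Hd0]; auto.
  { intros s Hs. destruct (chain_union_branch _ H) as [T1 _].
    apply typeof_Neq in T1 as (_ & T1 & _).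
    destruct (typeof_apps_arg _ _ _ _ s T1 eq_refl Hs) as (c & Tc & _). eauto. }
  destruct (chain_union_request RDec (Neq a (apps (N x) ss) (apps (N x) ts)) (N x) (N x) m)
    as (alts & alt & Hreq & Hin & He).
  { intros n Hn. exists alts0. split.
    - apply (st_Dec norm (chain_set n) a x ss ts alts0); auto.
    - exists a, x, ss, ts. auto. }
  destruct Hreq as (a' & x' & ss' & ts' & Hp & Hd). injection Hp as -> Hp1 Hp2.
  apply apps_N_inj in Hp1 as [<- <-]. apply apps_N_inj in Hp2 as [_ <-].
  destruct (dec_alts_in _ _ _ _ Hd Hin) as (s & t & b & Hst & Tb & ->).
  exists s, t, b. repeat split; auto. apply He. left. reflexivity.
Qed.

Lemma chain_union_Con a s t u v : is_sort a -> chain_union (Eq a s t) ->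
  chain_union (Neq a u v) ->
  (chain_union (Neq a s u) /\ chain_union (Neq a t u)) \/
  (chain_union (Neq a s v) /\ chain_union (Neq a t v)).
Proof.
  intros Ha H1 H2.
  destruct (chain_union_eventually _ H1) as [m1 Hm1], (chain_union_eventually _ H2) as [m2 Hm2].
  destruct (chain_union_request RCon (Eq a s t) (Neq a u v) s (max m1 m2))
    as (alts & alt & Hreq & Hin & He).
  { intros n Hn. eexists. split.
    - apply (st_Con norm (chain_set n) a s t u v); auto; [apply Hm1|apply Hm2]; lia.
    - exists a, s, t, u, v. auto. }
  destruct Hreq as (a' & s' & t' & u' & v' & Hp & Hq & ->).
  injection Hp as -> -> ->. injection Hq as -> ->.
  destruct Hin as [<-|[<-|[]]]; [left|right]; split; apply He; simpl; auto.
Qed.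

Lemma chain_union_evident : evident norm chain_union.
Proof.
  constructor.
  - exact chain_union_branch.
  - exact chain_union_DN.
  - exact chain_union_BQ.
  - exact chain_union_BE.
  - exact chain_union_FQ.
  - exact chain_union_FE.
  - exact chain_union_Mat.
  - exact chain_union_Dec.
  - exact chain_union_Con.
Qed.

End Saturation.

Lemma consistent_evident_extension norm A : norm_axioms norm -> consistent norm A ->
  exists E, evident norm E /\ forall s, A s -> E s.
Proof.
  intros Hnorm HA. exists (chain_union norm A HA). split.
  - exact (chain_union_evident norm Hnorm A HA).
  - intros s Hs. exists 0. exact Hs.
Qed.

Theorem theorem9p2 (norm : tm -> tm) (sapp : subst -> tm -> tm)
  (Hnorm : norm_axioms norm) (Hsubst : subst_axioms norm sapp)
  (A : tm -> Prop) :
  branch norm A -> finite A -> ~ satisfiable A -> refutable norm A.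
Proof.
  intros HB HF HS. apply NNPP. intros HR.
  destruct (consistent_evident_extension norm A Hnorm (conj HB (conj HF HR))) as (E & HE & HAE).
  destruct (evident_satisfiable norm sapp Hnorm Hsubst E HE) as (F & I & tv & HL & HI & Hsat).
  apply HS. exists F, I, tv. split; [exact HL|split; [exact HI|]].
  intros s Hs. apply Hsat, HAE, Hs.
Qed.
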